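(* Let $R$ be a binary relation on $U$ and $x\in U$. The following are equivalent: (i) $R(x)$ is completely join-prime in $\wp(U)^{\vartriangle}$; (ii) $R(x)\not\subseteq\bigcup\{R(y)\mid y\in U,\ R(x)\not\subseteq R(y)\}$; (iii) there exists $w\in R(x)$ such that for all $y\in U$, $w\in R(y)$ implies $R(x)\subseteq R(y)$. Consequently $\mathcal J_p(\wp(U)^{\vartriangle})=\{R(x)\mid x\in U,\ \mathfrak{core}R(x)\neq\emptyset\}$ and $\mathcal J_p(\wp(U)^{\blacktriangle})=\{\breve R(x)\mid x\in U,\ \mathfrak{core}\breve R(x)\neq\emptyset\}$.
   Context: Let $U$ be a set and $R\subseteq U\times U$ a binary relation. For $x\in U$, $R(x)=\{y\in U\mid (x,y)\in R\}$ and $\breve R(x)=\{y\in U\mid (y,x)\in R\}$. $\mathfrak{core}R(x)=\{w\in R(x)\mid \text{for all }y\in U,\ w\in R(y)\text{ implies }R(x)\subseteq R(y)\}$, and $\mathfrak{core}\breve R(x)$ is defined likewise with $\breve R$ in place of $R$. For $X\subseteq U$: $X^{\blacktriangle}=\{x\in U\mid R(x)\cap X\neq\emptyset\}$ and $X^{\vartriangle}=\{x\in U\mid \breve R(x)\cap X\neq\emptyset\}$, so $\{x\}^{\vartriangle}=R(x)$, $\{x\}^{\blacktriangle}=\breve R(x)$. $\wp(U)^{\blacktriangle}=\{X^{\blacktriangle}\mid X\subseteq U\}$, $\wp(U)^{\vartriangle}=\{X^{\vartriangle}\mid X\subseteq U\}$, complete lattices under $\subseteq$ with joins given by unions. An element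 $p$ of a complete lattice $L$ is completely join-prime if $p\le\bigvee X$ implies $p\le x$ for some $x\in X$, for every $X\subseteq L$; $\mathcal J_p(L)$ denotes the set of such elements. *)

From mathcomp Require Import all_boot.
From mathcomp Require Export classical_sets.
Set Implicit Arguments. Unset Strict Implicit. Unset Printing Implicit Defensive.
Local Open Scope classical_set_scope.

Definition Rimg (U : Type) (R : set (U * U)) (x : U) : set U :=
  [set y | R (x, y)].
Definition Rbreve (U : Type) (R : set (U * U)) (x : U) : set U :=
  [set y | R (y, x)].

Definition coreR (U : Type) (R : set (U * U)) (x : U) : set U :=
  [set w | Rimg R x w /\ forall y, Rimg R y w -> Rimg R x `<=` Rimg R y].
Definition coreRbreve (U : Type) (R : set (U * U)) (x : U) : set U :=
  [set w | Rbreve R x w /\ forall y, Rbreve R y w -> Rbreve R x `<=` Rbreve R y].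

Definition bupper (U : Type) (R : set (U * U)) (X : set U) : set U :=
  [set x | Rimg R x `&` X !=set0].
Definition wupper (U : Type) (R : set (U * U)) (X : set U) : set U :=
  [set x | Rbreve R x `&` X !=set0].

Definition wlattice (U : Type) (R : set (U * U)) : set (set U) :=
  [set wupper R X | X in [set: set U]].
Definition blattice (U : Type) (R : set (U * U)) : set (set U) :=
  [set bupper R X | X in [set: set U]].

(* Completely join-prime elements of a complete lattice L of subsets of U,
   ordered by inclusion, whose joins are unions (as is the case for
   wp(U)^vartriangle and wp(U)^blacktriangle). *)
Definition cjp (U : Type) (L : set (set U)) (p : set U) : Prop :=
  L p /\
  forall X : set (set U), X `<=` L ->
    p `<=` \bigcup_(x in X) x -> exists2 x, X x & p `<=` x.

Definition Jp (U : Type) (L : set (set U)) : set (set U) := [set p | cjp L p].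

From mathcomp Require Import all_boot boolp classical_sets.
Local Open Scope classical_set_scope.

(* X^vartriangle is the union of the R(y), y in X, and R(x) = {x}^vartriangle.
   Hence a completely join-prime element lies below, and so equals, one of the
   R(y) making it up.  And R(x) is completely join-prime iff some w in R(x) lies
   only in those R(y) containing R(x): whichever member of a covering family
   contains such a w contains all of R(x).  wp(U)^blacktriangle is
   wp(U)^vartriangle for the converse relation. *)

Lemma cjp_bigcup {T I : Type} {L : set (set T)} {p : set T} {P : set I}
    {F : I -> set T} :
  cjp L p -> (forall i, P i -> L (F i)) ->
  p `<=` \bigcup_(i in P) F i -> exists2 i, P i & p `<=` F i.
Proof.
move=> [_ pJ] FL pF.
have [_ [i Pi <-] pFi] : exists2 A, (F @` P) A & p `<=` A.
  by apply: pJ; [move=> _ [i Pi <-]; exact: FL | rewrite bigcup_image].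
by exists i.
Qed.

Section Wlattice.
Variables (U : Type) (R : set (U * U)).

Lemma wupperE (X : set U) : wupper R X = \bigcup_(y in X) Rimg R y.
Proof. by apply/seteqP; split=> x [y]; [case=> ? ?|]; exists y. Qed.

Lemma wlattice_Rimg (x : U) : wlattice R (Rimg R x).
Proof. by exists [set x] => //; rewrite wupperE bigcup_set1. Qed.

Lemma not_covered_core (x : U) :
  ~ Rimg R x `<=` \bigcup_(y in [set y | ~ Rimg R x `<=` Rimg R y]) Rimg R y <->
  coreR R x !=set0.
Proof.
split=> [xNcov | [w [xw wcore]] xcov].
- apply: contrapT => coreN; apply: xNcov => w xw.
  apply: contrapT => wNcov; apply: coreN; exists w; split=> // y yw.
  by apply: contrapT => xNy; apply: wNcov; exists y.
- by have [y xNy yw] := xcov w xw; apply: xNy; exact: wcore.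
Qed.

Lemma cjp_Rimg (x : U) : cjp (wlattice R) (Rimg R x) <-> coreR R x !=set0.
Proof.
split=> [xJ | [w [xw wcore]]].
- apply/not_covered_core => xcov.
  have [y xNy ?] := cjp_bigcup xJ (fun y _ => wlattice_Rimg y) xcov.
  exact: xNy.
- split=> [|X XL xX]; first exact: wlattice_Rimg.
  have [A XA Aw] := xX w xw; exists A => //.
  have [Y _ defA] := XL A XA; move: Aw; rewrite -defA => -[y [yw Yy]] z xz.
  by exists y; split=> //; exact: wcore.
Qed.

Lemma cjp_wlattice_Rimg (p : set U) :
  cjp (wlattice R) p -> exists2 y, p = Rimg R y & coreR R y !=set0.
Proof.
move=> pJ; have [[Y _ defp] _] := pJ.
have [y Yy py] : exists2 y, Y y & p `<=` Rimg R y.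
  by apply: cjp_bigcup pJ (fun y _ => wlattice_Rimg y) _; rewrite -wupperE defp.
have p_eq : p = Rimg R y.
  by apply/seteqP; split=> //; rewrite -defp wupperE; exact: bigcup_sup.
by exists y => //; apply/cjp_Rimg; rewrite -p_eq.
Qed.

Lemma Jp_wlattice :
  Jp (wlattice R) = [set Rimg R x | x in [set x | coreR R x !=set0]].
Proof.
apply/seteqP; split=> p.
- by move=> /cjp_wlattice_Rimg [y -> ycore]; exists y.
- by move=> [x xcore <-]; apply/cjp_Rimg.
Qed.

End Wlattice.

Theorem mainTheorem10 (U : Type) (R : set (U * U)) :
  (forall x : U,
     (cjp (wlattice R) (Rimg R x) <->
        ~ (Rimg R x `<=`
             \bigcup_(y in [set y | ~ (Rimg R x `<=` Rimg R y)]) Rimg R y)) /\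
     (~ (Rimg R x `<=`
             \bigcup_(y in [set y | ~ (Rimg R x `<=` Rimg R y)]) Rimg R y) <->
        exists2 w, Rimg R x w &
          forall y : U, Rimg R y w -> Rimg R x `<=` Rimg R y)) /\
  Jp (wlattice R) = [set Rimg R x | x in [set x | coreR R x !=set0]] /\
  Jp (blattice R) = [set Rbreve R x | x in [set x | coreRbreve R x !=set0]].
Proof.
split; last split; last first.
- exact: Jp_wlattice [set p | R (p.2, p.1)].
- exact: Jp_wlattice.
move=> x; rewrite not_covered_core cjp_Rimg; split=> //.
by split=> [[w []] | [w]]; exists w.
Qed.
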